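(* Assume $D_i>0$ for all $i\in\mathcal D$. Then all minimum-delay equilibrium solutions of the instance have the same vector of delays $(\delta_i)_{i\in\mathcal D}$, where $\delta_i=\min_{j}(\ell_{ij}+\beta_j)$.
   Context: An instance consists of finite sets $\mathcal D$ (demand nodes) and $\mathcal F$ (FCs), finite nonnegative travel times $\ell_{ij}$, demands $D_i\ge0$ and capacities $C_j\ge0$ with $\sum_iD_i\le\sum_jC_j$. An assignment is $x\in\mathbb R_{\ge0}^{\mathcal D\times\mathcal F}$ with $\sum_jx_{ij}=D_i$ for all $i$ and $\sum_ix_{ij}\le C_j$ for all $j$. An equilibrium solution is a pair $(x,\beta)$ with $x$ an assignment and $\beta\in\mathbb R^{\mathcal F}_{\ge0}$ such that $x_{ij}>0$ only if $j\in\arg\min_{j'}(\ell_{ij'}+\beta_{j'})$, and $\beta_j=0$ whenever $\sum_ix_{ij}<C_j$. The delay of demand $i$ is $\delta_i=\min_j(\ell_{ij}+\beta_j)$; the delay of the solution is $\sum_iD_i\delta_i$, and a minimum-delay equilibrium solution minimizes this over all equilibrium solutions. *)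

From mathcomp Require Import all_boot all_order all_algebra.
Set Implicit Arguments. Unset Strict Implicit. Unset Printing Implicit Defensive.
Import Order.TTheory GRing.Theory Num.Theory.
Local Open Scope ring_scope.

Section Defs.
Variables (R : realFieldType) (Dn Fc : finType).
(* travel times l i j, demands Dm i, capacities C j *)
Variables (l : Dn -> Fc -> R) (Dm : Dn -> R) (C : Fc -> R).

Definition assignment (x : Dn -> Fc -> R) : Prop :=
  (forall i j, 0 <= x i j) /\
  (forall i, \sum_(j : Fc) x i j = Dm i) /\
  (forall j, \sum_(i : Dn) x i j <= C j).

Definition equilibrium (x : Dn -> Fc -> R) (beta : Fc -> R) : Prop :=
  assignment x /\
  (forall j, 0 <= beta j) /\
  (forall i j, 0 < x i j -> forall j', l i j + beta j <= l i j' + beta j') /\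
  (forall j, \sum_(i : Dn) x i j < C j -> beta j = 0).

(* delta_i = min_j (l i j + beta j)  (0 by convention if there is no FC) *)
Definition delay (beta : Fc -> R) (i : Dn) : R :=
  match [pick j : Fc] with
  | Some j0 => \big[Num.min/(l i j0 + beta j0)]_(j : Fc) (l i j + beta j)
  | None => 0
  end.

Definition total_delay (beta : Fc -> R) : R :=
  \sum_(i : Dn) Dm i * delay beta i.

Definition min_delay_equilibrium (x : Dn -> Fc -> R) (beta : Fc -> R) : Prop :=
  equilibrium x beta /\
  forall x' beta', equilibrium x' beta' -> total_delay beta <= total_delay beta'.
End Defs.

From mathcomp Require Import all_boot all_order all_algebra.
From mathcomp Require Import lra.
Set Implicit Arguments. Unset Strict Implicit. Unset Printing Implicit Defensive.
Import Order.TTheory GRing.Theory Num.Theory.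
Local Open Scope ring_scope.

(* Equilibria are exactly the pairs (x, beta) such that x is an optimal
   transportation plan and (delay beta, beta) an optimal solution of the dual
   program: maximise sum_i D_i d_i - sum_j C_j b_j subject to b >= 0 and
   d_i <= l_ij + b_j.  The dual feasible set is a lattice under pointwise min
   and max, and the dual objective is modular on it, so the pointwise minimum
   of two optimal dual solutions is again optimal.  Hence (x1, min beta1 beta2)
   is an equilibrium, with delays min(delta1, delta2) <= delta1, delta2.  Since
   every D_i > 0, minimality of the total delay of (x1, beta1) and (x2, beta2)
   forces delta1 = min(delta1, delta2) = delta2. *)

Lemma le_weighted_sum_eq (R : numDomainType) (I : finType) (w f g : I -> R) :
  (forall k, 0 < w k) -> (forall k, f k <= g k) ->
  \sum_k w k * g k <= \sum_k w k * f k -> forall k, f k = g k.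
Proof.
move=> w_gt0 le_fg le_sum k.
have term_ge0 k' : 0 <= w k' * (g k' - f k').
  by rewrite mulr_ge0 ?subr_ge0 ?le_fg // ltW.
have sum0 : \sum_k' w k' * (g k' - f k') = 0.
  apply/le_anti; rewrite sumr_ge0 // andbT.
  under eq_bigr do rewrite mulrBr.
  by rewrite sumrB subr_le0.
have /eqP := psumr_eq0P (fun k' _ => term_ge0 k') sum0 (i := k) isT.
by rewrite mulf_eq0 (gt_eqF (w_gt0 k)) subr_eq0 /= => /eqP.
Qed.

Section Duality.
Variables (R : realFieldType) (Dn Fc : finType).
Variables (l : Dn -> Fc -> R) (Dm : Dn -> R) (C : Fc -> R).

Definition cost (x : Dn -> Fc -> R) : R := \sum_i \sum_j l i j * x i j.

Definition dual_value (d : Dn -> R) (b : Fc -> R) : R :=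
  \sum_i Dm i * d i - \sum_j C j * b j.

Definition dual_feasible (d : Dn -> R) (b : Fc -> R) : Prop :=
  (forall j, 0 <= b j) /\ (forall i j, d i <= l i j + b j).

Definition complementary (x : Dn -> Fc -> R) (d : Dn -> R) (b : Fc -> R) : Prop :=
  (forall i j, 0 < x i j -> d i = l i j + b j) /\
  (forall j, \sum_i x i j < C j -> b j = 0).

Lemma cost_sub_dual_value x d b : (forall i, \sum_j x i j = Dm i) ->
  cost x - dual_value d b =
  \sum_i \sum_j (l i j + b j - d i) * x i j + \sum_j b j * (C j - \sum_i x i j).
Proof.
move=> row_sum; rewrite /cost /dual_value.
have demand : \sum_i Dm i * d i = \sum_i \sum_j d i * x i j.
  by apply: eq_bigr => i _; rewrite -mulr_sumr row_sum mulrC.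
have load : \sum_i \sum_j b j * x i j = \sum_j b j * \sum_i x i j.
  by rewrite exchange_big; apply: eq_bigr => j _; rewrite mulr_sumr.
have reduced_cost : \sum_i \sum_j (l i j + b j - d i) * x i j =
    \sum_i \sum_j l i j * x i j + \sum_i \sum_j b j * x i j
    - \sum_i \sum_j d i * x i j.
  rewrite -big_split -sumrB; apply: eq_bigr => i _.
  by rewrite -big_split -sumrB; apply: eq_bigr => j _; rewrite mulrBl mulrDl.
have slack : \sum_j b j * (C j - \sum_i x i j) =
    \sum_j C j * b j - \sum_j b j * \sum_i x i j.
  by rewrite -sumrB; apply: eq_bigr => j _; rewrite mulrBr mulrC.
rewrite demand reduced_cost load slack; lra.
Qed.

Lemma dual_value_eq_cost x d b : assignment Dm C x -> dual_feasible d b ->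
  dual_value d b = cost x <-> complementary x d b.
Proof.
move=> [x_ge0 [row_sum col_sum]] [b_ge0 d_le].
have rc_ge0 i j : 0 <= (l i j + b j - d i) * x i j by rewrite mulr_ge0 ?subr_ge0.
have rcs_ge0 i : 0 <= \sum_j (l i j + b j - d i) * x i j by rewrite sumr_ge0.
have sl_ge0 j : 0 <= b j * (C j - \sum_i x i j) by rewrite mulr_ge0 ?subr_ge0.
transitivity (cost x - dual_value d b == 0).
  by rewrite subr_eq0; split=> [->|/eqP->].
rewrite (cost_sub_dual_value _ _ row_sum).
rewrite paddr_eq0 ?sumr_ge0 //; split.
- move=> /andP[/eqP rcs0 /eqP sl0]; split=> [i j x_gt0 | j col_lt].
    have rcs_i0 := psumr_eq0P (fun i _ => rcs_ge0 i) rcs0 (i := i) isT.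
    have /eqP := psumr_eq0P (fun j _ => rc_ge0 i j) rcs_i0 (i := j) isT.
    by rewrite mulf_eq0 (gt_eqF x_gt0) orbF subr_eq0 => /eqP.
  have /eqP := psumr_eq0P (fun j _ => sl_ge0 j) sl0 (i := j) isT.
  by rewrite mulf_eq0 subr_eq0 (gt_eqF col_lt) orbF => /eqP.
- move=> [tight unsaturated]; apply/andP; split; apply/eqP.
    apply: big1 => i _; apply: big1 => j _.
    have [<-|x_gt0] := eqVneq 0 (x i j); first by rewrite mulr0.
    by rewrite (tight i j) ?subrr ?mul0r // lt_neqAle x_gt0 x_ge0.
  apply: big1 => j _; have [->|col_lt] := eqVneq (\sum_i x i j) (C j).
    by rewrite subrr mulr0.
  by rewrite unsaturated ?mul0r // lt_neqAle col_lt col_sum.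
Qed.

Lemma dual_value_le_cost x d b : assignment Dm C x -> dual_feasible d b ->
  dual_value d b <= cost x.
Proof.
move=> [x_ge0 [row_sum col_sum]] [b_ge0 d_le].
rewrite -subr_ge0 (cost_sub_dual_value _ _ row_sum).
apply: addr_ge0.
  by apply: sumr_ge0 => i _; apply: sumr_ge0 => j _; rewrite mulr_ge0 ?subr_ge0.
by apply: sumr_ge0 => j _; rewrite mulr_ge0 ?subr_ge0.
Qed.

Lemma dual_feasible_min d1 b1 d2 b2 : dual_feasible d1 b1 -> dual_feasible d2 b2 ->
  dual_feasible (d1 \min d2) (b1 \min b2).
Proof.
move=> [b1_ge0 d1_le] [b2_ge0 d2_le]; split=> [j | i j] /=.
  by rewrite le_min b1_ge0 b2_ge0.
by rewrite addr_minr le_min !ge_min d1_le d2_le orbT.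
Qed.

Lemma dual_feasible_max d1 b1 d2 b2 : dual_feasible d1 b1 -> dual_feasible d2 b2 ->
  dual_feasible (d1 \max d2) (b1 \max b2).
Proof.
move=> [b1_ge0 d1_le] [b2_ge0 d2_le]; split=> [j | i j] /=.
  by rewrite le_max b1_ge0.
by rewrite addr_maxr ge_max !le_max d1_le d2_le orbT.
Qed.

Lemma dual_value_min_max d1 b1 d2 b2 :
  dual_value (d1 \min d2) (b1 \min b2) + dual_value (d1 \max d2) (b1 \max b2) =
  dual_value d1 b1 + dual_value d2 b2.
Proof.
have demand : \sum_i Dm i * (d1 \min d2) i + \sum_i Dm i * (d1 \max d2) i =
    \sum_i Dm i * d1 i + \sum_i Dm i * d2 i.
  by rewrite -!big_split; apply: eq_bigr => i _ /=; rewrite -!mulrDr addr_min_max.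
have capacity : \sum_j C j * (b1 \min b2) j + \sum_j C j * (b1 \max b2) j =
    \sum_j C j * b1 j + \sum_j C j * b2 j.
  by rewrite -!big_split; apply: eq_bigr => j _ /=; rewrite -!mulrDr addr_min_max.
rewrite /dual_value; lra.
Qed.

Lemma delay_le b i j : delay l b i <= l i j + b j.
Proof.
rewrite /delay; case: pickP => [j0 _ | no_fc]; first exact: bigmin_le.
by have := no_fc j.
Qed.

Lemma delay_ge b i a (j0 : Fc) : (forall j, a <= l i j + b j) -> a <= delay l b i.
Proof.
move=> a_le; rewrite /delay; case: pickP => [j1 _ | no_fc]; last by have := no_fc j0.
exact: le_bigmin.
Qed.

Lemma dual_feasible_delay b : (forall j, 0 <= b j) -> dual_feasible (delay l b) b.
Proof. by split=> // i j; apply: delay_le. Qed.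

Lemma delay_min b1 b2 i :
  delay l (b1 \min b2) i = Num.min (delay l b1 i) (delay l b2 i).
Proof.
have [j0 _ | no_fc] := pickP (@predT Fc); last first.
  rewrite /delay; case: pickP => [j _ | _]; [by have := no_fc j | by rewrite minxx].
apply/le_anti/andP; split.
  rewrite le_min; apply/andP; split; apply: (delay_ge j0) => j;
    by apply: (le_trans (delay_le _ _ j)); rewrite /= lerD2l ge_min lexx ?orbT.
apply: (delay_ge j0) => j /=.
by rewrite addr_minr le_min !ge_min !delay_le orbT.
Qed.

Lemma equilibriumP x b : equilibrium l Dm C x b <->
  [/\ assignment Dm C x, forall j, 0 <= b j & complementary x (delay l b) b].
Proof.
split=> [[x_asg [b_ge0 [opt unsaturated]]] | [x_asg b_ge0 [tight unsaturated]]].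
  split=> //; split=> // i j x_gt0; apply/le_anti.
  by rewrite delay_le (delay_ge j) //; apply: opt.
do 3!split=> //; move=> i j x_gt0 j'.
by rewrite -(tight i j x_gt0) delay_le.
Qed.

Lemma equilibrium_dual_value x b : equilibrium l Dm C x b ->
  dual_value (delay l b) b = cost x.
Proof.
move=> /equilibriumP[x_asg b_ge0 compl].
by apply/dual_value_eq_cost => //; apply: dual_feasible_delay.
Qed.

Lemma equilibrium_min x1 b1 x2 b2 :
  equilibrium l Dm C x1 b1 -> equilibrium l Dm C x2 b2 ->
  equilibrium l Dm C x1 (b1 \min b2).
Proof.
move=> eq1 eq2; have /equilibriumP[x1_asg b1_ge0 _] := eq1.
have /equilibriumP[x2_asg b2_ge0 _] := eq2.
set d1 := delay l b1; set d2 := delay l b2.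
have feas1 := dual_feasible_delay b1_ge0; have feas2 := dual_feasible_delay b2_ge0.
have bmin_ge0 j : 0 <= (b1 \min b2) j by rewrite /= le_min b1_ge0 b2_ge0.
have dmin : dual_value (delay l (b1 \min b2)) (b1 \min b2) =
    dual_value (d1 \min d2) (b1 \min b2).
  by congr (_ - _); apply: eq_bigr => i _; rewrite delay_min.
have same_cost : cost x1 = cost x2.
  apply/le_anti/andP; split.
    by rewrite -(equilibrium_dual_value eq1) (dual_value_le_cost x2_asg feas1).
  by rewrite -(equilibrium_dual_value eq2) (dual_value_le_cost x1_asg feas2).
have max_le := dual_value_le_cost x1_asg (dual_feasible_max feas1 feas2).
have min_le := dual_value_le_cost x1_asg (dual_feasible_min feas1 feas2).
have modular := dual_value_min_max d1 b1 d2 b2.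
rewrite (equilibrium_dual_value eq1) (equilibrium_dual_value eq2) -same_cost
  in modular.
apply/equilibriumP; split=> //; apply/dual_value_eq_cost => //.
  exact: dual_feasible_delay bmin_ge0.
by rewrite dmin; lra.
Qed.

End Duality.

Theorem corollary3p5 (R : realFieldType) (Dn Fc : finType)
  (l : Dn -> Fc -> R) (Dm : Dn -> R) (C : Fc -> R) :
  (forall i j, 0 <= l i j) ->
  (forall i, 0 < Dm i) ->
  (forall j, 0 <= C j) ->
  \sum_(i : Dn) Dm i <= \sum_(j : Fc) C j ->
  forall (x1 x2 : Dn -> Fc -> R) (beta1 beta2 : Fc -> R),
    min_delay_equilibrium l Dm C x1 beta1 ->
    min_delay_equilibrium l Dm C x2 beta2 ->
    forall i, delay l beta1 i = delay l beta2 i.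
Proof.
move=> _ Dm_gt0 _ _ x1 x2 b1 b2 [eq1 min1] [eq2 min2] i.
have eq_min := equilibrium_min eq1 eq2.
have min_le1 k : delay l (b1 \min b2) k <= delay l b1 k.
  by rewrite delay_min ge_min lexx.
have min_le2 k : delay l (b1 \min b2) k <= delay l b2 k.
  by rewrite delay_min ge_min lexx orbT.
rewrite -(le_weighted_sum_eq Dm_gt0 min_le1 (min1 _ _ eq_min)).
exact: (le_weighted_sum_eq Dm_gt0 min_le2 (min2 _ _ eq_min)).
Qed.
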